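(* Let $\mathbb{F}$ be an algebraically closed field of characteristic $0$, $D$ a finite-dimensional $\mathbb{F}$-vector space with $\dim D\geq2$, and $\Gamma$ an additive subgroup of $D^{\ast}$ with $\bigcap_{\alpha\in\Gamma}\ker\alpha=\{0\}$. Let $\mu,\eta\in D^{\ast}$ and $\zeta\in\Gamma$. Then: (i) $\mathscr{M}_\mu$ is irreducible if $\mu\notin\Gamma$; if $\mu\in\Gamma$, then $\mathscr{M}_\mu=\big(\bigoplus_{\alpha\in\Gamma\setminus\{-\mu\}}\mathbb{F}v_\alpha\big)\oplus\mathbb{F}v_{-\mu}$ is a direct sum of two irreducible submodules. (ii) If $\eta\neq0$, then $\mathscr{A}_{\zeta,\eta}$ and $\mathscr{B}_{\zeta,\eta}$ are indecomposable but reducible; $\mathscr{A}_{\zeta,\eta}$ has the irreducible submodule $\bigoplus_{\alpha\in\Gamma\setminus\{-\zeta\}}\mathbb{F}v_\alpha$, while $\mathscr{B}_{\zeta,\eta}$ has the one-dimensional trivial submodule $\mathbb{F}v_{-\zeta}$ and the quotient $\mathscr{B}_{\zeta,\eta}/\mathbb{F}v_{-\zeta}$ is irreducible. If $\eta=0$, then $\mathscr{A}_{\zeta,0}\simeq\mathscr{B}_{\zeta,0}\simeq\mathscr{M}_0$.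
   Context: $\mathbb{F}[\Gamma]$ has basis $\{x^\alpha\mid\alpha\in\Gamma\}$ with $x^\alpha x^\beta=x^{\alpha+\beta}$; $\mathcal{W}(\Gamma,D)=\mathbb{F}[\Gamma]\otimes D$ (elements $x^\alpha\partial$) has bracket $[x^\alpha\partial_1,x^\beta\partial_2]=x^{\alpha+\beta}(\beta(\partial_1)\partial_2-\alpha(\partial_2)\partial_1)$. $\mathcal{S}(\Gamma,D)$ is the subalgebra spanned by $x^\alpha\partial$ with $\alpha\in\Gamma\setminus\{0\}$, $\partial\in\ker\alpha$, graded by $\Gamma$. The modules below are $\mathcal{S}(\Gamma,D)$-modules with basis $\{v_\beta\mid\beta\in\Gamma\}$, where $\alpha\in\Gamma\setminus\{0\}$, $\partial\in\ker\alpha$: $\mathscr{M}_\mu$: $x^\alpha\partial.v_\beta=(\beta+\mu)(\partial)v_{\alpha+\beta}$ for all $\beta$. $\mathscr{A}_{\zeta,\eta}$: $x^\alpha\partial.v_\beta=(\beta+\zeta)(\partial)v_{\alpha+\beta}$ for $\beta\neq-\zeta$, and $x^\alpha\partial.v_{-\zeta}=\eta(\partial)v_{\alpha-\zeta}$. $\mathscr{B}_{\zeta,\eta}$: $x^\alpha\partial.v_\beta=(\beta+\zeta)(\partial)v_{\alpha+\beta}$ for $\beta\neq-\alpha-\zeta$, and $x^\alpha\partial.v_{-\alpha-\zeta}=\eta(\partial)v_{-\zeta}$. *)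

From HB Require Import structures.
From mathcomp Require Import all_boot all_order all_algebra.
Set Implicit Arguments. Unset Strict Implicit. Unset Printing Implicit Defensive.
Import Order.TTheory GRing.Theory Num.Theory.
Local Open Scope ring_scope.

(* A module with basis
   {v_b | b in G} is modelled by its coefficient functions: an element is a
   function f : D^* -> F, supported in G and with finite support
   (f = \sum_b f b * v_b).  All modules considered here are "weighted shift"
   modules: x^a d . v_b = c a d b * v_(a+b), for a coefficient function c. *)

Section ShiftModules.
Variables (F : fieldType) (D : vectType F).
Local Notation Dstar := 'Hom(D, F^o).
Implicit Types (G : pred Dstar) (c : Dstar -> D -> Dstar -> F) (f : Dstar -> F).

Definition Vmod G f : Prop :=
  (forall g, g \notin G -> f g = 0) /\
  exists s : seq Dstar, forall g, f g != 0 -> g \in s.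

Definition act c (a : Dstar) (d : D) f : Dstar -> F :=
  fun g => c a d (g - a) * f (g - a).

Definition zerof f : Prop := forall g, f g = 0.

(* W is an S(G,D)-submodule: a subspace of Vmod G stable under all
   spanning elements x^a d with a in G \ {0}, d in ker a *)
Definition submodule G c (W : (Dstar -> F) -> Prop) : Prop :=
  [/\ (forall f, W f -> Vmod G f),
      W (fun _ => 0),
      (forall f h, W f -> W h -> W (fun g => f g + h g)),
      (forall (k : F) f, W f -> W (fun g => k * f g)) &
      (forall a d f, a \in G -> a != 0 -> a d = 0 -> W f -> W (act c a d f))].

Definition irreducible_sub G c (W : (Dstar -> F) -> Prop) : Prop :=
  [/\ submodule G c W,
      (exists f, W f /\ ~ zerof f) &
      (forall U, submodule G c U -> (forall f, U f -> W f) ->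
         (forall f, U f -> zerof f) \/ (forall f, W f -> U f))].

Definition irreducible_mod G c : Prop := irreducible_sub G c (Vmod G).

Definition direct_sum G (W1 W2 : (Dstar -> F) -> Prop) : Prop :=
  (forall f, W1 f -> W2 f -> zerof f) /\
  (forall f, Vmod G f -> exists f1 f2,
       [/\ W1 f1, W2 f2 & forall g, f g = f1 g + f2 g]).

Definition indecomposable G c : Prop :=
  (exists f, Vmod G f /\ ~ zerof f) /\
  ~ (exists W1 W2,
        submodule G c W1 /\ submodule G c W2 /\
        (exists f, W1 f /\ ~ zerof f) /\ (exists f, W2 f /\ ~ zerof f) /\
        direct_sum G W1 W2).

Definition quotient_irreducible G c (U : (Dstar -> F) -> Prop) : Prop :=
  [/\ submodule G c U,
      (exists f, Vmod G f /\ ~ U f) &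
      (forall W, submodule G c W -> (forall f, U f -> W f) ->
         (forall f, W f -> U f) \/ (forall f, Vmod G f -> W f))].

Definition mod_iso G c1 c2 : Prop :=
  exists phi : (Dstar -> F) -> (Dstar -> F),
  (forall f, Vmod G f -> Vmod G (phi f)) /\
  [/\ (forall f h, Vmod G f -> Vmod G h -> f =1 h -> phi f =1 phi h),
      (forall (k : F) f h, Vmod G f -> Vmod G h ->
          phi (fun g => k * f g + h g) =1 (fun g => k * phi f g + phi h g)),
      (forall f h, Vmod G f -> Vmod G h -> phi f =1 phi h -> f =1 h),
      (forall h, Vmod G h -> exists2 f, Vmod G f & phi f =1 h) &
      (forall a d f, a \in G -> a != 0 -> a d = 0 -> Vmod G f ->
          phi (act c1 a d f) =1 act c2 a d (phi f))].

Definition line (b : Dstar) f : Prop :=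
  exists k : F, forall g, f g = if g == b then k else 0.

Definition avoid G (b : Dstar) f : Prop := Vmod G f /\ f b = 0.

Definition cM (mu : Dstar) : Dstar -> D -> Dstar -> F :=
  fun a d b => (b + mu) d.
Definition cA (zeta eta : Dstar) : Dstar -> D -> Dstar -> F :=
  fun a d b => if b == - zeta then eta d else (b + zeta) d.
Definition cB (zeta eta : Dstar) : Dstar -> D -> Dstar -> F :=
  fun a d b => if b == - a - zeta then eta d else (b + zeta) d.

End ShiftModules.

From HB Require Import structures.
From mathcomp Require Import all_boot all_order all_algebra.
From mathcomp Require Import ring zify.
From Stdlib Require Import Classical FunctionalExtensionality PropExtensionality.
Import GRing.Theory.
Set Implicit Arguments. Unset Strict Implicit. Unset Printing Implicit Defensive.
Local Open Scope ring_scope.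

(* Away from the single weight -nu (nu = mu, resp. zeta), each of the three
   modules is M_nu: x^a d sends v_b to (b + nu)(d) v_(a+b).  Let f be a vector
   of a submodule W with a nonzero component at a weight b0 <> -nu.  Off -nu,
   the operator (x^(-2a) d)(x^a d)^2 - k (x^(-a) d)(x^a d) is diagonal with
   eigenvalue t^2 (t - k), t = (g + nu)(d); choosing d in ker a that separates
   the weight b0 from another weight x kills the x-component and keeps the
   b0-component, and further operators x^a d move the surviving component to
   any weight b <> -nu.  Such a and d exist because Gamma separates the points
   of D and dim D >= 2: for nonzero phi, psi in D^* there is a nonzero a in
   Gamma whose kernel contains a vector on which neither phi nor psi vanishes.
   So every submodule meeting the weights <> -nu contains all v_b, b <> -nu,
   modulo F v_(-nu); this gives the irreducibility statements.  A and B are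
   indecomposable because every nonzero submodule of A contains
   \bigoplus_(b <> -zeta) F v_b and every nonzero submodule of B contains
   F v_(-zeta).  For eta = 0 all three modules are M_zeta, the shift of M_0 by
   zeta. *)

Lemma eq_pigeonhole (T : eqType) (y1 y2 y3 l m : T) :
  y1 != y2 -> y1 != y3 -> y2 != y3 ->
  [|| (y1 != l) && (y1 != m), (y2 != l) && (y2 != m) | (y3 != l) && (y3 != m)].
Proof.
move=> n12 n13 n23; apply/negPn/negP; rewrite !negb_or !negb_and !negbK.
by case/and3P=> /orP[]/eqP e1 /orP[]/eqP e2 /orP[]/eqP e3; subst;
  rewrite ?eqxx in n12 n13 n23.
Qed.

Section Functionals.
Variables (F : fieldType) (D : vectType F).
Local Notation Dstar := 'Hom(D, F^o).
Implicit Types (phi psi p a u v x : Dstar) (d : D).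

Lemma scaleoE (k x : F) : k *: (x : F^o) = k * x.
Proof. by []. Qed.

Lemma notin_line_ker a phi : a != 0 -> phi \notin <[a]>%VS ->
  exists2 d, a d = 0 & phi d != 0.
Proof.
move=> /lfunPn[d0]; rewrite zero_lfunE => ad0 phi_a.
apply: NNPP => no_d; case/vlineP: phi_a; exists (phi d0 / a d0).
apply/lfunP => d; rewrite scale_lfunE scaleoE.
set e := d - (a d / a d0) *: d0.
have ae : a e = 0 by rewrite linearB linearZ /= scaleoE mulfVK ?subrr.
have /eqP : phi e = 0.
  by apply: NNPP => phie; apply: no_d; exists e => //; apply/eqP.
by rewrite linearB linearZ /= scaleoE subr_eq0 => /eqP ->; ring.
Qed.

Lemma ker_witness2 a phi psi : a != 0 -> phi \notin <[a]>%VS -> psi \notin <[a]>%VS ->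
  exists2 d, a d = 0 & (phi d != 0) && (psi d != 0).
Proof.
move=> a0 /(notin_line_ker a0)[d1 ad1 phid1] /(notin_line_ker a0)[d2 ad2 psid2].
have [psid1|psid1] := eqVneq (psi d1) 0; last by exists d1; rewrite ?phid1.
have [phid2|phid2] := eqVneq (phi d2) 0; last by exists d2; rewrite ?phid2.
by exists (d1 + d2); rewrite !linearD /= ?ad1 ?ad2 ?psid1 ?phid2 ?addr0 ?add0r ?phid1.
Qed.

Lemma vline_eq x phi : phi != 0 -> phi \in <[x]>%VS -> <[phi]>%VS = <[x]>%VS.
Proof.
move=> phi0 phix; apply/eqP; rewrite eqEdim -memvE phix !dim_vline phi0.
by case: (x != 0).
Qed.

Lemma vline_neq u v : v \notin <[u]>%VS -> <[u]>%VS != <[v]>%VS.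
Proof. by apply: contraNneq => ->; apply: memv_line. Qed.

Lemma avoid_two_lines phi psi x1 x2 x3 : phi != 0 -> psi != 0 ->
  <[x1]>%VS != <[x2]>%VS -> <[x1]>%VS != <[x3]>%VS -> <[x2]>%VS != <[x3]>%VS ->
  exists2 x, x \in [:: x1; x2; x3] & (phi \notin <[x]>%VS) && (psi \notin <[x]>%VS).
Proof.
move=> phi0 psi0 n12 n13 n23.
have memE chi x : chi != 0 -> (chi \notin <[x]>%VS) = (<[x]>%VS != <[chi]>%VS).
  by move=> chi0; congr negb; apply/idP/eqP => [/(vline_eq chi0)->|->] //; apply: memv_line.
case/or3P: (eq_pigeonhole <[phi]>%VS <[psi]>%VS n12 n13 n23) => ok;
  [exists x1 | exists x2 | exists x3]; by rewrite ?inE ?eqxx ?orbT //= !memE.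
Qed.

Lemma line_twist p u a d : a != 0 -> a d = 0 -> p d != 0 ->
  p \in <[u]>%VS -> p + a \in <[u - a]>%VS -> p = - u.
Proof.
move=> a0 ad pd /vlineP[l pE] /vlineP[m paE].
have ud : u d != 0.
  by apply: contraNneq pd => ud0; rewrite pE scale_lfunE ud0 scaleoE mulr0.
have ml : m = l.
  move: (congr1 (fun q : Dstar => q d) paE); rewrite /= pE !lfun_simp ad.
  by rewrite !scaleoE subr0 addr0 => /(mulIf ud).
move: paE; rewrite pE ml scalerBr => /addrI/eqP.
rewrite -subr_eq0 opprK -{1}[a]scale1r -scalerDl scaler_eq0 (negbTE a0) orbF.
by rewrite addr_eq0 => /eqP l1; rewrite -[l]opprK -l1 scaleN1r.
Qed.

Hypothesis dimD : (2 <= \dim (fullv : {vspace D}))%N.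

Lemma lker_nontrivial phi : exists2 d, d != 0 & phi d = 0.
Proof.
have dim_img : (\dim (phi @: fullv) <= 1)%N.
  by rewrite (_ : 1%N = \dim (fullv : {vspace F^o})) ?dimvS ?subvf ?dimvf.
have : (0 < \dim (fullv :&: lker phi))%N.
  by move: dimD dim_img; rewrite -(limg_ker_dim phi fullv); lia.
rewrite lt0n dimv_eq0 -vpick0 => pick0; exists (vpick (fullv :&: lker phi)) => //.
by have := memv_pick (fullv :&: lker phi); rewrite memv_cap memv_ker => /andP[_ /eqP].
Qed.

End Functionals.

Lemma addv_self_neq0 (F : fieldType) (V : lmodType F) (v : V) :
  [pchar F] =i pred0 -> v != 0 -> v + v != 0.
Proof.
by move=> /pcharf0P char0 v0; rewrite -mulr2n -scaler_nat scaler_eq0 char0 negb_or v0.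
Qed.

Section ShiftModules.
Variables (F : fieldType) (D : vectType F).
Local Notation Dstar := 'Hom(D, F^o).
Variable G : pred Dstar.
Hypotheses (G0 : 0 \in G) (GB : forall a b, a \in G -> b \in G -> a - b \in G).
Hypothesis G_sep : forall d : D, (forall a, a \in G -> a d = 0) -> d = 0.
Hypothesis dimD : (2 <= \dim (fullv : {vspace D}))%N.
Implicit Types (phi psi a b : Dstar) (d : D).

Lemma memGN a : a \in G -> - a \in G.
Proof. by move=> Ga; rewrite -sub0r GB. Qed.

Lemma memGD a b : a \in G -> b \in G -> a + b \in G.
Proof. by move=> Ga Gb; rewrite -[b]opprK GB ?memGN. Qed.

(* [spanning a d]: x^a d is one of the spanning elements of S(Gamma, D);
   [delta b] below is the basis vector v_b. *)
Definition spanning a d := [/\ a \in G, a != 0 & a d = 0].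

Lemma spanningN a d : spanning a d -> spanning (- a) d.
Proof. by case=> Ga a0 ad; split; rewrite ?memGN ?oppr_eq0 // opp_lfunE ad oppr0. Qed.

Lemma spanning2 a d : [pchar F] =i pred0 -> spanning a d -> spanning (a + a) d.
Proof.
by move=> char0 [Ga a0 ad]; split; rewrite ?memGD ?addv_self_neq0 // add_lfunE ad addr0.
Qed.

Lemma noncollinear_in_G a : exists2 b, b \in G & b \notin <[a]>%VS.
Proof.
have [d d0 ad] := lker_nontrivial dimD a.
have [b Gb bd] : exists2 b, b \in G & b d != 0.
  apply: NNPP => no_b; case/eqP: d0; apply: G_sep => b Gb.
  by apply: NNPP => bd; apply: no_b; exists b => //; apply/eqP.
by exists b => //; apply: contra bd => /vlineP[k ->]; rewrite scale_lfunE ad scaleoE mulr0.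
Qed.

Lemma spanning_witness phi psi : phi != 0 -> psi != 0 ->
  exists a d, [/\ spanning a d, phi d != 0 & psi d != 0].
Proof.
move=> phi0 psi0.
have [a1 Ga1 a10] := noncollinear_in_G 0.
have {a10} a10 : a1 != 0 by apply: contraNneq a10 => ->; apply: mem0v.
have [a2 Ga2 a2a1] := noncollinear_in_G a1.
have a20 : a2 != 0 by apply: contraNneq a2a1 => ->; apply: mem0v.
have a12a1 : a1 + a2 \notin <[a1]>%VS.
  by apply: contra a2a1 => a12; rewrite -(addKr a1 a2) memvD ?memvN ?memv_line.
have a12a2 : a1 + a2 \notin <[a2]>%VS.
  apply: contra a2a1 => a12.
  have a1a2 : a1 \in <[a2]>%VS by rewrite -(addrK a2 a1) memvB ?memv_line.
  by rewrite (vline_eq a10 a1a2) memv_line.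
have a120 : a1 + a2 != 0 by apply: contraNneq a12a1 => ->; apply: mem0v.
have [a a_in /andP[phia psia]] := avoid_two_lines phi0 psi0
  (vline_neq a2a1) (vline_neq a12a1) (vline_neq a12a2).
have [Ga a0] : a \in G /\ a != 0.
  by move: a_in; rewrite !inE => /or3P[]/eqP->; rewrite ?memGD.
by have [d ad /andP[]] := ker_witness2 a0 phia psia; exists a, d.
Qed.

Implicit Types (c : Dstar -> D -> Dstar -> F) (f h : Dstar -> F).

Definition delta b : Dstar -> F := fun g => if g == b then 1 else 0.

Lemma delta_neq0 b : ~ zerof (delta b).
Proof. by move/(_ b)/eqP; rewrite /delta eqxx oner_eq0. Qed.

Lemma Vmod0 : Vmod G (fun _ => 0).
Proof. by split=> //; exists [::] => g; rewrite eqxx. Qed.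

Lemma VmodD f h : Vmod G f -> Vmod G h -> Vmod G (fun g => f g + h g).
Proof.
move=> [Gf [s fs]] [Gh [t ht]]; split=> [g g_notin|]; first by rewrite Gf ?Gh ?addr0.
exists (s ++ t) => g; rewrite mem_cat.
have [fg0|/fs->//] := eqVneq (f g) 0; have [hg0|/ht->] := eqVneq (h g) 0.
  by rewrite fg0 hg0 addr0 eqxx.
by rewrite orbT.
Qed.

Lemma VmodZ k f : Vmod G f -> Vmod G (fun g => k * f g).
Proof.
move=> [Gf [s fs]]; split=> [g g_notin|]; first by rewrite Gf ?mulr0.
by exists s => g kfg; apply: fs; apply: contraNneq kfg => ->; rewrite mulr0.
Qed.

Lemma Vmod_act c a d f : a \in G -> Vmod G f -> Vmod G (act c a d f).
Proof.
move=> Ga [Gf [s fs]]; split=> [g g_notin|].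
  by rewrite /act Gf ?mulr0 //; apply: contra g_notin => /memGD-/(_ a Ga); rewrite subrK.
exists [seq x + a | x <- s] => g act_g; apply/mapP; exists (g - a); last by rewrite subrK.
by apply: fs; apply: contraNneq act_g => fga; rewrite /act fga mulr0.
Qed.

Lemma Vmod_delta b : b \in G -> Vmod G (delta b).
Proof.
move=> Gb; split=> [g|]; first by rewrite /delta; case: eqP => // ->; rewrite Gb.
by exists [:: b] => g; rewrite /delta inE; case: (g =P b) => // _; rewrite eqxx.
Qed.

Lemma Vmod_span (P : pred Dstar) (W : (Dstar -> F) -> Prop) :
  W (fun _ => 0) -> (forall f h, W f -> W h -> W (fun g => f g + h g)) ->
  (forall k f, W f -> W (fun g => k * f g)) ->
  (forall b, b \in P -> W (delta b)) -> forall f, Vmod P f -> W f.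
Proof.
move=> W0 WD WZ Wdelta f [Pf [s]]; elim: s f Pf => [|x s IHs] f Pf fs.
  have -> : f = fun _ => 0; last by [].
  by apply: functional_extensionality => g; apply: NNPP => /eqP/fs.
have [Px|Px] := boolP (x \in P); last first.
  apply: IHs => // g /[dup] fg /fs; rewrite inE => /orP[/eqP gx|//].
  by move: fg; rewrite gx Pf ?eqxx.
pose f' g := f g + - f x * delta x g.
have -> : f = fun g => f' g + f x * delta x g.
  by apply: functional_extensionality => g; rewrite /f'; ring.
apply: WD; last exact/WZ/Wdelta.
apply: IHs => [g g_notin|g]; rewrite /f' /delta; case: (g =P x) => [gx|xg].
- by move: g_notin; rewrite gx Px.
- by rewrite Pf ?mulr0 ?addr0.
- by rewrite gx mulr1 subrr eqxx.
- by rewrite mulr0 addr0 => /fs; rewrite inE => /orP[/eqP|].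
Qed.

Section SubmoduleTheory.
Variables (c : Dstar -> D -> Dstar -> F) (W : (Dstar -> F) -> Prop).
Hypothesis W_sub : submodule G c W.

Lemma submodule_Vmod f : W f -> Vmod G f. Proof. by case: W_sub => WV *; apply: WV. Qed.
Lemma submodule0 : W (fun _ => 0). Proof. by case: W_sub. Qed.
Lemma submoduleD f h : W f -> W h -> W (fun g => f g + h g).
Proof. by case: W_sub => _ _ WD *; apply: WD. Qed.
Lemma submoduleZ k f : W f -> W (fun g => k * f g).
Proof. by case: W_sub => _ _ _ WZ *; apply: WZ. Qed.
Lemma submodule_act a d f : a \in G -> a != 0 -> a d = 0 -> W f -> W (act c a d f).
Proof. by case: W_sub => _ _ _ _ Wact *; apply: Wact. Qed.

End SubmoduleTheory.

Lemma exists_in_G_neq x : exists2 b, b \in G & b != x.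
Proof.
have [a Ga a0] := noncollinear_in_G 0.
have [->|x0] := eqVneq x 0; last by exists 0; rewrite // eq_sym.
by exists a => //; apply: contraNneq a0 => ->; apply: mem0v.
Qed.

Lemma zero_or_nonzero (U : (Dstar -> F) -> Prop) :
  (forall f, U f -> zerof f) \/ exists f g, U f /\ f g != 0.
Proof.
case: (classic (exists f g, U f /\ f g != 0)) => [|no_f]; [by right | left].
move=> f Uf g; apply: NNPP => fg; apply: no_f; exists f, g; split=> //; exact/eqP.
Qed.

Lemma submoduleI c (W1 W2 : (Dstar -> F) -> Prop) :
  submodule G c W1 -> submodule G c W2 -> submodule G c (fun f => W1 f /\ W2 f).
Proof.
move=> [V1 Z1 D1 S1 A1] [_ Z2 D2 S2 A2]; split.
- by move=> f [/V1].
- by [].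
- by move=> f h [? ?] [? ?]; split; [apply: D1 | apply: D2].
- by move=> k f [? ?]; split; [apply: S1 | apply: S2].
- by move=> a d f Ga a0 ad [? ?]; split; [apply: A1 | apply: A2].
Qed.

Lemma indecomposable_of_least c (K : (Dstar -> F) -> Prop) :
  (exists f, K f /\ ~ zerof f) -> (forall f, K f -> Vmod G f) ->
  (forall W, submodule G c W -> (exists f, W f /\ ~ zerof f) -> forall f, K f -> W f) ->
  indecomposable G c.
Proof.
move=> [k [Kk k0]] KV K_least; split; first by exists k; split; last exact: k0; apply: KV.
move=> [W1 [W2 [sub1 [sub2 [W1_0 [W2_0 [W12 _]]]]]]].
by apply: k0; apply: W12; [apply: K_least sub1 W1_0 _ _ | apply: K_least sub2 W2_0 _ _].
Qed.

Lemma not_irreducible_of_proper c (U : (Dstar -> F) -> Prop) : submodule G c U ->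
  (exists f, U f /\ ~ zerof f) -> (exists f, Vmod G f /\ ~ U f) -> ~ irreducible_mod G c.
Proof.
move=> subU [u [Uu u0]] [f [Vf Uf]] [_ _ /(_ U subU (submodule_Vmod subU))[U0|UV]].
- exact: u0 (U0 u Uu).
- exact: Uf (UV f Vf).
Qed.

Section Core.
Variables (nu : Dstar) (c : Dstar -> D -> Dstar -> F) (W : (Dstar -> F) -> Prop).
Hypothesis W_sub : submodule G c W.
Hypothesis c_off_pole : forall a d b, a \in G -> a != 0 -> a d = 0 ->
  b != - nu -> a + b != - nu -> c a d b = (b + nu) d.
Hypothesis c_pole : forall f a d, W f -> a \in G -> a != 0 -> a d = 0 ->
  c a d (- nu) * f (- nu) = 0.
Hypothesis char0 : [pchar F] =i pred0.

Lemma act_closed a d f : spanning a d -> W f -> W (act c a d f).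
Proof. by case=> Ga a0 ad; apply: submodule_act. Qed.

Lemma weight_shift g a d : a d = 0 -> (g + a + nu) d = (g + nu) d.
Proof. by move=> ad; rewrite !add_lfunE ad addr0. Qed.

Lemma pole_weight g a d : g + a = - nu -> a d = 0 -> (g + nu) d = 0.
Proof. by move=> ga ad; rewrite -(weight_shift g ad) ga addNr zero_lfunE. Qed.

Lemma act_off_pole a d f g : spanning a d -> W f -> g != - nu ->
  act c a d f g = (g + nu) d * f (g - a).
Proof.
move=> [Ga a0 ad] Wf g_nu; rewrite /act.
have [ga|ga] := eqVneq (g - a) (- nu).
  by rewrite ga c_pole // (pole_weight ga) ?mul0r // opp_lfunE ad oppr0.
rewrite c_off_pole //; last by rewrite addrC subrK.
by rewrite !add_lfunE opp_lfunE ad subr0.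
Qed.

Lemma weight_act a d f g : spanning a d -> W f ->
  (g + nu) d * act c a d f g = ((g + nu) d) ^+ 2 * f (g - a).
Proof.
move=> ad Wf; have [->|g_nu] := eqVneq g (- nu).
  by rewrite addNr zero_lfunE !mul0r expr2 !mul0r.
by rewrite act_off_pole // mulrA -expr2.
Qed.

Lemma act2_off_pole a d f g : spanning a d -> W f -> g != - nu ->
  act c (- a) d (act c a d f) g = ((g + nu) d) ^+ 2 * f g.
Proof.
move=> ad Wf g_nu; have [_ _ a_d] := ad.
rewrite act_off_pole; [|exact: spanningN|exact: act_closed|done].
by rewrite opprK -(weight_shift g a_d) weight_act // addrK.
Qed.

Lemma act3_off_pole a d f g : spanning a d -> W f -> g != - nu ->
  act c (- (a + a)) d (act c a d (act c a d f)) g = ((g + nu) d) ^+ 3 * f g.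
Proof.
move=> ad Wf g_nu; have [_ _ a_d] := ad.
have aad := spanning2 char0 ad; have [_ _ aa_d] := aad.
rewrite act_off_pole; [|exact: spanningN|exact/act_closed/act_closed|done].
rewrite opprK -(weight_shift g aa_d) weight_act; [|done|exact: act_closed].
by rewrite addrA addrK (weight_shift _ a_d) expr2 -mulrA weight_act // addrK mulrA -exprS.
Qed.

Definition weight_filter a d k f : Dstar -> F := fun g =>
  act c (- (a + a)) d (act c a d (act c a d f)) g + (- k) * act c (- a) d (act c a d f) g.

Lemma weight_filter_in a d k f : spanning a d -> W f -> W (weight_filter a d k f).
Proof.
move=> ad Wf; apply: submoduleD W_sub _ _ _ _; last apply: submoduleZ W_sub _ _ _.
  by apply: act_closed (spanningN (spanning2 char0 ad)) _; apply/act_closed/act_closed.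
by apply: act_closed (spanningN ad) _; apply: act_closed.
Qed.

Lemma weight_filter_off_pole a d k f g : spanning a d -> W f -> g != - nu ->
  weight_filter a d k f g = ((g + nu) d) ^+ 2 * ((g + nu) d - k) * f g.
Proof. by move=> ad Wf g_nu; rewrite /weight_filter act3_off_pole ?act2_off_pole //; ring. Qed.

Lemma kill_weight h b x : W h -> h b != 0 -> b != - nu -> x != - nu -> x != b ->
  exists2 h', W h' & [/\ h' b != 0, h' x = 0 &
                        forall g, g != - nu -> h g = 0 -> h' g = 0].
Proof.
move=> Wh hb b_nu x_nu xb.
have [|//|a [d [ad bd bxd]]] := spanning_witness (_ : b + nu != 0) (_ : b - x != 0).
- by rewrite addr_eq0.
- by rewrite subr_eq0 eq_sym.
exists (weight_filter a d ((x + nu) d) h); first exact: weight_filter_in.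
rewrite !weight_filter_off_pole // subrr mulr0 mul0r; split=> // [|g g_nu hg0].
  rewrite !mulf_neq0 ?expf_neq0 // !add_lfunE opprD addrACA subrr addr0.
  by move: bxd; rewrite !lfun_simp.
by rewrite weight_filter_off_pole // hg0 mulr0.
Qed.

Definition peaked b h := h b != 0 /\ forall g, g != - nu -> g != b -> h g = 0.

Lemma isolate_weight h b (s : seq Dstar) : W h -> h b != 0 -> b != - nu ->
  (forall g, g != - nu -> g != b -> h g != 0 -> g \in s) -> exists2 h', W h' & peaked b h'.
Proof.
elim: s h => [|x s IHs] h Wh hb b_nu h_s.
  by exists h => //; split=> // g g_nu gb; apply: NNPP => /eqP/(h_s g g_nu gb).
have [x_skip|] := boolP ((x == - nu) || (x == b)).
  apply: IHs Wh hb b_nu _ => g g_nu gb /(h_s g g_nu gb); rewrite inE => /orP[/eqP gx|//].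
  by move: x_skip; rewrite -gx (negbTE g_nu) (negbTE gb).
rewrite negb_or => /andP[x_nu xb].
have [h' Wh' [h'b h'x h'_supp]] := kill_weight Wh hb b_nu x_nu xb.
apply: IHs Wh' h'b b_nu _ => g g_nu gb h'g.
have /(h_s g g_nu gb) : h g != 0 by apply: contraNneq h'g => /(h'_supp g g_nu)/eqP.
by rewrite inE => /orP[/eqP gx|//]; move: h'g; rewrite gx h'x eqxx.
Qed.

Lemma shift_peak h b a d : W h -> peaked b h -> spanning a d -> (b + nu) d != 0 ->
  peaked (b + a) (act c a d h).
Proof.
move=> Wh [hb h_supp] ad bd; have [_ _ a_d] := ad.
have ba_nu : b + a != - nu by apply: contraNneq bd => ba; rewrite (pole_weight ba a_d).
split=> [|g g_nu gba]; first by rewrite act_off_pole // addrK mulf_neq0 ?weight_shift.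
rewrite act_off_pole //; have [ga|ga] := eqVneq (g - a) (- nu).
  by rewrite (pole_weight ga) ?mul0r // opp_lfunE a_d oppr0.
by rewrite h_supp ?mulr0 //; apply: contraNneq gba => <-; rewrite subrK.
Qed.

Lemma move_peak_direct h b0 b : W h -> peaked b0 h -> b0 \in G -> b \in G -> b != b0 ->
  b0 + nu \notin <[b - b0]>%VS -> exists2 h', W h' & peaked b h'.
Proof.
move=> Wh peak_h Gb0 Gb bb0 p_u.
have u0 : b - b0 != 0 by rewrite subr_eq0.
have [d ud pd] := notin_line_ker u0 p_u.
have ud_span : spanning (b - b0) d by split; rewrite ?GB.
exists (act c (b - b0) d h); first exact: act_closed.
by have := shift_peak Wh peak_h ud_span pd; rewrite (addrC b0) subrK.
Qed.

Lemma move_peak h b0 b : W h -> peaked b0 h -> b0 \in G -> b0 != - nu ->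
  b \in G -> b != - nu -> exists2 h', W h' & peaked b h'.
Proof.
move=> Wh peak_h Gb0 b0_nu Gb b_nu.
have [->|bb0] := eqVneq b b0; first by exists h.
have [p_u|p_u] := boolP (b0 + nu \in <[b - b0]>%VS); last first.
  exact: move_peak_direct Wh peak_h Gb0 Gb bb0 p_u.
(* No direct step is possible; a detour through the weight b0 + a works,
   because by line_twist both steps can only be blocked if b = -nu. *)
have p0 : b0 + nu != 0 by rewrite addr_eq0.
have [a [d [ad pd _]]] := spanning_witness p0 p0; have [Ga a0 a_d] := ad.
apply: (move_peak_direct (act_closed ad Wh) (shift_peak Wh peak_h ad pd)); rewrite ?memGD //.
  apply: contraTneq p_u => ->; rewrite addrAC subrr add0r.
  by apply: contraNN pd => /vlineP[k ->]; rewrite scale_lfunE a_d scaleoE mulr0.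
apply: contra b_nu => twist; rewrite -addr_eq0.
rewrite addrAC opprD addrA in twist.
by have := line_twist a0 a_d pd p_u twist; rewrite opprB => /addrI->; rewrite subrr.
Qed.

Lemma submodule_delta_off_pole f b0 b : W f -> f b0 != 0 -> b0 != - nu ->
  b \in G -> b != - nu -> exists2 h, W h & forall g, g != - nu -> h g = delta b g.
Proof.
move=> Wf fb0 b0_nu Gb b_nu.
have Gb0 : b0 \in G by apply: contraNT fb0 => /((submodule_Vmod W_sub Wf).1) ->.
have [s f_s] := (submodule_Vmod W_sub Wf).2.
have [h1 Wh1 peak1] := isolate_weight Wf fb0 b0_nu (fun g _ _ => f_s g).
have [h Wh [hb h_supp]] := move_peak Wh1 peak1 Gb0 b0_nu Gb b_nu.
exists (fun g => (h b)^-1 * h g); first exact: (submoduleZ W_sub _ Wh).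
move=> g g_nu; rewrite /delta; have [->|gb] := eqVneq g b; first by rewrite mulVf.
by rewrite (h_supp g) ?mulr0.
Qed.

End Core.

Section Avoid.
Variables (nu : Dstar) (c : Dstar -> D -> Dstar -> F).
Hypothesis c_off_pole : forall a d b, a \in G -> a != 0 -> a d = 0 ->
  b != - nu -> a + b != - nu -> c a d b = (b + nu) d.
Hypothesis char0 : [pchar F] =i pred0.

Lemma avoid_submodule : (forall a d, spanning a d -> c a d (- nu - a) = 0) ->
  submodule G c (avoid G (- nu)).
Proof.
move=> c_to_pole; split.
- by move=> f [].
- by split; [apply: Vmod0 | ].
- by move=> f h [Vf f0] [Vh h0]; split; [apply: VmodD | rewrite f0 h0 addr0].
- by move=> k f [Vf f0]; split; [apply: VmodZ | rewrite f0 mulr0].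
- move=> a d f Ga a0 ad [Vf f0]; split; first exact: Vmod_act.
  by rewrite /act c_to_pole ?mul0r.
Qed.

Lemma avoid_irreducible : (forall a d, spanning a d -> c a d (- nu - a) = 0) ->
  irreducible_sub G c (avoid G (- nu)).
Proof.
move=> c_to_pole; have sub_avoid := avoid_submodule c_to_pole.
split=> //.
  have [b Gb b_nu] := exists_in_G_neq (- nu).
  exists (delta b); split; last exact: delta_neq0.
  by split; [apply: Vmod_delta | rewrite /delta eq_sym (negbTE b_nu)].
move=> U subU U_avoid; have [|[f [g0 [Uf fg0]]]] := zero_or_nonzero U; [by left | right].
have g0_nu : g0 != - nu by apply: contraNneq fg0 => ->; rewrite (U_avoid f Uf).2.
have U_pole f' a d : U f' -> a \in G -> a != 0 -> a d = 0 -> c a d (- nu) * f' (- nu) = 0.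
  by move=> /U_avoid[_ ->]; rewrite mulr0.
move=> f' [[Gf' f'_fin] f'0].
have : Vmod [pred g | (g \in G) && (g != - nu)] f'.
  by split=> // g; rewrite inE negb_and negbK => /orP[/Gf'|/eqP->].
apply: Vmod_span; [exact: submodule0 subU | exact: submoduleD subU | exact: submoduleZ subU |].
move=> b /andP[Gb b_nu].
have [h Uh h_delta] :=
  submodule_delta_off_pole subU c_off_pole U_pole char0 Uf fg0 g0_nu Gb b_nu.
have -> : delta b = h; last exact: Uh.
apply: functional_extensionality => g; have [->|g_nu] := eqVneq g (- nu).
  by rewrite (U_avoid h Uh).2 /delta eq_sym (negbTE b_nu).
by rewrite h_delta.
Qed.

End Avoid.

Section Line.
Variables (nu : Dstar) (c : Dstar -> D -> Dstar -> F).
Hypothesis G_pole : - nu \in G.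
Hypothesis c_pole : forall a d, spanning a d -> c a d (- nu) = 0.

Lemma line_act_zero a d f : spanning a d -> line (- nu) f -> zerof (act c a d f).
Proof.
move=> ad [k f_line] g; rewrite /act f_line.
by case: eqP => [->|_]; rewrite ?c_pole ?mul0r ?mulr0.
Qed.

Lemma line_Vmod f : line (- nu) f -> Vmod G f.
Proof.
move=> [k f_line]; split=> [g|]; first by rewrite f_line; case: eqP => // ->; rewrite G_pole.
by exists [:: - nu] => g; rewrite f_line inE; have [//|_] := eqVneq g (- nu); rewrite eqxx.
Qed.

Lemma line_submodule : submodule G c (line (- nu)).
Proof.
split.
- exact: line_Vmod.
- by exists 0 => g; case: ifP.
- move=> f h [k f_line] [l h_line]; exists (k + l) => g.
  by rewrite f_line h_line; case: ifP; rewrite ?addr0.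
- by move=> k f [l f_line]; exists (k * l) => g; rewrite f_line; case: ifP; rewrite ?mulr0.
- move=> a d f Ga a0 ad f_line; exists 0 => g.
  by rewrite (line_act_zero (And3 Ga a0 ad) f_line); case: ifP.
Qed.

Lemma line_delta : line (- nu) (delta (- nu)).
Proof. by exists 1. Qed.

Lemma line_or_off_pole f : line (- nu) f \/ exists2 g, g != - nu & f g != 0.
Proof.
case: (classic (exists2 g, g != - nu & f g != 0)) => [|no_g]; [by right | left].
exists (f (- nu)) => g; have [->//|g_nu] := eqVneq g (- nu).
by apply: NNPP => fg; apply: no_g; exists g => //; apply/eqP.
Qed.

End Line.

Lemma line_in_submodule c (W : (Dstar -> F) -> Prop) nu w : submodule G c W ->
  W w -> line (- nu) w -> ~ zerof w -> forall f, line (- nu) f -> W f.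
Proof.
move=> subW Ww [k w_line] w0 f [l f_line].
have k0 : k != 0 by apply: contra_not_neq w0 => k0 g; rewrite w_line k0; case: ifP.
have -> : f = fun g => l / k * w g.
  apply: functional_extensionality => g.
  by rewrite f_line w_line; case: ifP; rewrite ?mulfVK ?mulr0.
exact: (submoduleZ subW _ Ww).
Qed.

Lemma line_irreducible c nu : - nu \in G -> (forall a d, spanning a d -> c a d (- nu) = 0) ->
  irreducible_sub G c (line (- nu)).
Proof.
move=> G_pole c_pole; have sub_line := line_submodule G_pole c_pole.
split=> //; first by exists (delta (- nu)); split; [apply: line_delta | apply: delta_neq0].
move=> U subU U_line; have [|[f [g [Uf fg]]]] := zero_or_nonzero U; [by left | right].
by apply: line_in_submodule subU Uf (U_line f Uf) _ => /(_ g)/eqP; rewrite (negbTE fg).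
Qed.

Lemma direct_sum_avoid_line nu : direct_sum G (avoid G (- nu)) (line (- nu)).
Proof.
split=> [f [_ f0] [k f_line] g|f [Gf [s f_s]]].
  by move: f0; rewrite !f_line eqxx => k0; case: ifP.
exists (fun g => if g == - nu then 0 else f g), (fun g => if g == - nu then f (- nu) else 0).
split; [split; last by rewrite eqxx | by exists (f (- nu)) |].
  split=> [g g_notin|]; first by case: ifP => // _; apply: Gf.
  by exists s => g; case: ifP => [_|_ /f_s]; rewrite ?eqxx.
by move=> g; case: eqP => [->|_]; rewrite ?add0r ?addr0.
Qed.

Section ModulesM.
Variable mu : Dstar.
Hypothesis char0 : [pchar F] =i pred0.

Lemma cM_off_pole a d b : a \in G -> a != 0 -> a d = 0 ->
  b != - mu -> a + b != - mu -> cM mu a d b = (b + mu) d.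
Proof. by []. Qed.

Lemma cM_to_pole a d : spanning a d -> cM mu a d (- mu - a) = 0.
Proof. by case=> _ _ ad; rewrite /cM addrAC addNr sub0r opp_lfunE ad oppr0. Qed.

Lemma cM_pole a d : spanning a d -> cM mu a d (- mu) = 0.
Proof. by rewrite /cM addNr zero_lfunE. Qed.

Lemma M_irreducible : mu \notin G -> irreducible_mod G (cM mu).
Proof.
move=> mu_notin; have G_nmu : - mu \notin G by apply: contra mu_notin => /memGN; rewrite opprK.
rewrite /irreducible_mod (_ : Vmod G = avoid G (- mu)).
  exact: avoid_irreducible cM_off_pole char0 cM_to_pole.
apply: functional_extensionality => f; apply: propositional_extensionality.
by split=> [Vf|[]//]; split=> //; apply: Vf.1.
Qed.

End ModulesM.

Section ModulesAB.
Variables zeta eta : Dstar.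
Hypothesis G_zeta : zeta \in G.
Hypothesis char0 : [pchar F] =i pred0.

Lemma G_nzeta : - zeta \in G. Proof. exact: memGN. Qed.

Lemma cA_off_pole a d b : a \in G -> a != 0 -> a d = 0 ->
  b != - zeta -> a + b != - zeta -> cA zeta eta a d b = (b + zeta) d.
Proof. by move=> _ _ _ b_z _; rewrite /cA (negbTE b_z). Qed.

Lemma cA_to_pole a d : spanning a d -> cA zeta eta a d (- zeta - a) = 0.
Proof.
case=> _ a0 ad; rewrite /cA -{2}[- zeta]addr0 (inj_eq (addrI _)) oppr_eq0 (negbTE a0).
by rewrite addrAC addNr sub0r opp_lfunE ad oppr0.
Qed.

Lemma cA0E a d b : cA zeta 0 a d b = (b + zeta) d.
Proof. by rewrite /cA; case: eqP => [->|//]; rewrite addNr !zero_lfunE. Qed.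

Lemma cB0E a d b : spanning a d -> cB zeta 0 a d b = (b + zeta) d.
Proof.
by case=> _ _ ad; rewrite /cB; case: eqP => [->|//]; rewrite subrK zero_lfunE opp_lfunE ad oppr0.
Qed.

Lemma cB_off_pole a d b : a \in G -> a != 0 -> a d = 0 ->
  b != - zeta -> a + b != - zeta -> cB zeta eta a d b = (b + zeta) d.
Proof.
move=> _ _ _ _ ab_z; rewrite /cB; case: eqP => // b_az.
by move: ab_z; rewrite b_az addrA subrr sub0r eqxx.
Qed.

Lemma cB_pole a d : spanning a d -> cB zeta eta a d (- zeta) = 0.
Proof.
case=> _ a0 _; rewrite /cB addNr zero_lfunE eq_sym -{2}[- zeta]add0r.
by rewrite (inj_eq (addIr _)) oppr_eq0 (negbTE a0).
Qed.

Lemma A_avoid_irreducible : irreducible_sub G (cA zeta eta) (avoid G (- zeta)).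
Proof. exact: avoid_irreducible cA_off_pole char0 cA_to_pole. Qed.

Lemma A_not_irreducible : ~ irreducible_mod G (cA zeta eta).
Proof.
have [b Gb b_z] := exists_in_G_neq (- zeta).
apply: not_irreducible_of_proper (avoid_submodule cA_to_pole) _ _.
  exists (delta b); split; last exact: delta_neq0.
  by split; [apply: Vmod_delta | rewrite /delta eq_sym (negbTE b_z)].
exists (delta (- zeta)); split; first exact: Vmod_delta G_nzeta.
by case=> _ /eqP; rewrite /delta eqxx oner_eq0.
Qed.

Lemma B_quotient_irreducible : quotient_irreducible G (cB zeta eta) (line (- zeta)).
Proof.
have [b Gb b_z] := exists_in_G_neq (- zeta).
split; first exact: line_submodule G_nzeta cB_pole.
  exists (delta b); split; first exact: Vmod_delta.
  by case=> k /(_ b); rewrite /delta eqxx (negbTE b_z) => /eqP; rewrite oner_eq0.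
move=> W subW line_W.
case: (classic (forall f, W f -> line (- zeta) f)) => [|/not_all_ex_not[f Wf_line]].
  by left.
have [Wf f_line] := imply_to_and _ _ Wf_line; right.
have [//|[g0 g0_z fg0]] := line_or_off_pole zeta f.
have W_pole f' a d : W f' -> a \in G -> a != 0 -> a d = 0 ->
    cB zeta eta a d (- zeta) * f' (- zeta) = 0.
  by move=> _ Ga a0 ad; rewrite cB_pole ?mul0r.
apply: Vmod_span; [exact: submodule0 subW | exact: submoduleD subW | exact: submoduleZ subW |].
move=> b' Gb'; have [->|b'_z] := eqVneq b' (- zeta); first exact/line_W/line_delta.
have [h Wh h_delta] :=
  submodule_delta_off_pole subW cB_off_pole W_pole char0 Wf fg0 g0_z Gb' b'_z.
have -> : delta b' = fun g => h g + - h (- zeta) * delta (- zeta) g.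
  apply: functional_extensionality => g; rewrite /delta; have [->|g_z] := eqVneq g (- zeta).
    by rewrite eq_sym (negbTE b'_z) mulr1 subrr.
  by rewrite h_delta // /delta mulr0 addr0.
exact/(submoduleD subW Wh)/(submoduleZ subW)/line_W/line_delta.
Qed.

Lemma B_not_irreducible : ~ irreducible_mod G (cB zeta eta).
Proof.
have [_ [b [Vb b_line]] _] := B_quotient_irreducible.
apply: not_irreducible_of_proper (line_submodule G_nzeta cB_pole) _ _; last by exists b.
by exists (delta (- zeta)); split; [apply: line_delta | apply: delta_neq0].
Qed.

Lemma cB_act_onto_pole a d h : spanning a d ->
  (forall g, g != - zeta -> h g = delta (- a - zeta) g) ->
  forall g, act (cB zeta eta) a d h g = if g == - zeta then eta d else 0.
Proof.
move=> ad h_delta g; have [Ga a0 a_d] := ad; rewrite /act.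
have [ga_z|ga_z] := eqVneq (g - a) (- zeta).
  rewrite ga_z cB_pole // mul0r; case: eqP => // g_z.
  by move: ga_z; rewrite g_z -{2}[- zeta]addr0 => /addrI/eqP; rewrite oppr_eq0 (negbTE a0).
rewrite h_delta // /delta (addrC g) (inj_eq (addrI _)).
by case: eqP => [->|_]; rewrite ?mulr0 // /cB eqxx mulr1.
Qed.

Hypothesis eta0 : eta != 0.

Lemma A_least_submodule W : submodule G (cA zeta eta) W ->
  (exists f, W f /\ ~ zerof f) -> forall f, avoid G (- zeta) f -> W f.
Proof.
move=> subW [f [Wf f0]].
have [w [Ww Aw w0]] : exists w, [/\ W w, avoid G (- zeta) w & ~ zerof w].
  have Vf := submodule_Vmod subW Wf.
  have [fz|fz] := eqVneq (f (- zeta)) 0; first by exists f.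
  have [a [d [ad etad _]]] := spanning_witness eta0 eta0; have [Ga a0 a_d] := ad.
  exists (act (cA zeta eta) a d f); split.
  - exact: submodule_act.
  - by split; [apply: Vmod_act | rewrite /act cA_to_pole ?mul0r].
  - move/(_ (a - zeta))/eqP; rewrite /act addrAC subrr add0r /cA eqxx.
    by rewrite mulf_eq0 (negbTE etad) (negbTE fz).
have [sub_avoid _ avoid_min] := A_avoid_irreducible.
have [|W_avoid] := avoid_min _ (submoduleI subW sub_avoid) (fun _ => @proj2 _ _).
  by move/(_ w (conj Ww Aw)).
by move=> f' /W_avoid[].
Qed.

Lemma A_indecomposable : indecomposable G (cA zeta eta).
Proof.
have [sub_avoid [w [Aw w0]] _] := A_avoid_irreducible.
exact: indecomposable_of_least (ex_intro _ w (conj Aw w0)) (fun _ => @proj1 _ _) A_least_submodule.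
Qed.

Lemma B_least_submodule W : submodule G (cB zeta eta) W ->
  (exists f, W f /\ ~ zerof f) -> forall f, line (- zeta) f -> W f.
Proof.
move=> subW [f [Wf f0]].
have [f_line|[g0 g0_z fg0]] := line_or_off_pole zeta f.
  exact: line_in_submodule subW Wf f_line f0.
have [a [d [ad etad _]]] := spanning_witness eta0 eta0; have [Ga a0 a_d] := ad.
have Gb : - a - zeta \in G by rewrite GB ?memGN.
have b_z : - a - zeta != - zeta by rewrite -{2}[- zeta]add0r (inj_eq (addIr _)) oppr_eq0.
have W_pole f' a' d' : W f' -> a' \in G -> a' != 0 -> a' d' = 0 ->
    cB zeta eta a' d' (- zeta) * f' (- zeta) = 0.
  by move=> _ Ga' a'0 a'd; rewrite cB_pole ?mul0r.
have [h Wh h_delta] :=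
  submodule_delta_off_pole subW cB_off_pole W_pole char0 Wf fg0 g0_z Gb b_z.
apply: (line_in_submodule subW (submodule_act subW Ga a0 a_d Wh)).
  by exists (eta d); apply: cB_act_onto_pole.
by move/(_ (- zeta))/eqP; rewrite cB_act_onto_pole // eqxx (negbTE etad).
Qed.

Lemma B_indecomposable : indecomposable G (cB zeta eta).
Proof.
apply: indecomposable_of_least (line_Vmod G_nzeta) B_least_submodule.
by exists (delta (- zeta)); split; [apply: line_delta | apply: delta_neq0].
Qed.

End ModulesAB.

Lemma mod_iso_shift zeta c : zeta \in G ->
  (forall a d b, spanning a d -> c a d b = (b + zeta) d) -> mod_iso G c (cM 0).
Proof.
move=> G_zeta c_shift; have G_nzeta := memGN G_zeta.
have shift_Vmod x f : x \in G -> Vmod G f -> Vmod G (fun g => f (g - x)).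
  move=> Gx [Gf [s f_s]]; split=> [g g_notin|].
    by apply: Gf; apply: contra g_notin => /memGD-/(_ x Gx); rewrite subrK.
  by exists [seq y + x | y <- s] => g /f_s fg; apply/mapP; exists (g - x); rewrite ?subrK.
exists (fun f g => f (g - zeta)); split=> [f|]; first exact: shift_Vmod.
split=> [f h _ _ fh g|//|f h _ _ fh g|h Vh|a d f Ga a0 ad _ g].
- exact: fh.
- by have := fh (g + zeta); rewrite addrK.
- exists (fun g => h (g - - zeta)); first exact: shift_Vmod.
  by move=> g; rewrite opprK subrK.
- rewrite /act /cM c_shift; last exact: And3 Ga a0 ad.
  by rewrite addr0 (addrAC g (- zeta)) subrK.
Qed.

End ShiftModules.

Theorem lemma2p1 (F : closedFieldType) (D : vectType F)
    (G : pred 'Hom(D, F^o)) (mu eta zeta : 'Hom(D, F^o)) :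
  [pchar F] =i pred0 ->
  (2 <= \dim (fullv : {vspace D}))%N ->
  0 \in G ->
  (forall a b, a \in G -> b \in G -> a - b \in G) ->
  (forall d : D, (forall a, a \in G -> a d = 0) -> d = 0) ->
  zeta \in G ->
  [/\ (mu \notin G -> irreducible_mod G (cM mu)),
      (mu \in G ->
         [/\ direct_sum G (avoid G (- mu)) (line (- mu)),
             irreducible_sub G (cM mu) (avoid G (- mu)) &
             irreducible_sub G (cM mu) (line (- mu))]),
      (eta != 0 ->
         [/\ indecomposable G (cA zeta eta), ~ irreducible_mod G (cA zeta eta),
             indecomposable G (cB zeta eta) & ~ irreducible_mod G (cB zeta eta)] /\
         [/\ irreducible_sub G (cA zeta eta) (avoid G (- zeta)),
             submodule G (cB zeta eta) (line (- zeta)),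
             (forall a d f, a \in G -> a != 0 -> a d = 0 ->
                line (- zeta) f -> zerof (act (cB zeta eta) a d f)) &
             quotient_irreducible G (cB zeta eta) (line (- zeta))]) &
      (eta = 0 -> mod_iso G (cA zeta 0) (cM 0) /\ mod_iso G (cB zeta 0) (cM 0))].
Proof.
move=> char0 dimD G0 GB G_sep G_zeta.
have G_nzeta : - zeta \in G by apply: memGN.
split=> [mu_notin | mu_in | eta0 | _].
- by apply: M_irreducible.
- split; first exact: direct_sum_avoid_line.
    by apply: avoid_irreducible => //; apply: cM_to_pole.
  by apply: line_irreducible; [apply: memGN | apply: cM_pole].
- split; split.
  + by apply: A_indecomposable.
  + by apply: A_not_irreducible.
  + by apply: B_indecomposable.
  + by apply: B_not_irreducible.
  + by apply: A_avoid_irreducible.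
  + by apply: line_submodule => //; apply: cB_pole.
  + move=> a d f Ga a0 ad; apply: line_act_zero (And3 Ga a0 ad); exact: cB_pole.
  + by apply: B_quotient_irreducible.
- by split; apply: (mod_iso_shift G0 GB G_zeta) => a d b; [rewrite cA0E | apply: cB0E].
Qed.
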